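(* Let $K$ be a commutative unital ring, $k,n\in\mathbb{N}^*$, $\bar a,\bar b=(b_1,\dots,b_k),\bar c=(c_1,\dots,c_k)\in K^k$, $n=mk+r$ with $0\le r<k$, $d_i:=b_ic_i$, $\bar d:=(d_1,\dots,d_k)$. Suppose that for some $q\ge1$ and indices $1\le i_1<i_2<\dots<i_q\le k$ with $n>i_1$ we have $b_{i_1}=\dots=b_{i_q}=0$, or $c_{i_1}=\dots=c_{i_q}=0$. Put $i_{q+1}:=i_1+k$, $i_0:=i_q$. If $r\le i_1$ let $r':=r+k$ and $p:=0$; otherwise let $r':=r$ and let $p\in\mathbb{N}^*$ be such that $i_p<r\le i_{p+1}$. For $1\le j<q$ let $m_j:=1$ if $j<p$ and $m_j:=0$ if $j\ge p$; let $m_q:=0$ if $p>0$ or $m=0$, and $m_q:=-1$ if $p=0$. Then \[\det T^k_n(\bar a,\bar b,\bar c)=\alpha^{\bar a,-\bar d}(i_1,k)\prod_{j=1}^{q}\big(\alpha^{\bar a,-\bar d}_{i_j}(i_{j+1}-i_j,k)\big)^{m+m_j}\,\alpha^{\bar a,-\bar d}_{i_p}(r'-i_p,k).\]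
   Context: Vectors in $K^k$ are extended periodically, $-\bar d$ componentwise. $T^k_n(\bar a,\bar b,\bar c)\in M_n(K)$ is the tridiagonal matrix with diagonal $a_1,\dots,a_n$, superdiagonal $b_1,\dots,b_{n-1}$, subdiagonal $c_1,\dots,c_{n-1}$ (periodic indices), zeros elsewhere. In $P=\mathbb{Z}[x_1,\dots,x_k,y_1,\dots,y_k]$, indices are periodic; shift $f_s:=f(x_{s+1},\dots,x_{s+k},y_{s+1},\dots,y_{s+k})$; $f^{\bar a,\bar e}$ is the image under $x_i\mapsto a_i$, $y_i\mapsto e_i$, and $f_s^{\bar a,\bar e}:=(f_s)^{\bar a,\bar e}$. Write $[r]=\{1,\dots,r\}$, $S+1=\{s+1:s\in S\}$. For $0\le r\le k$, $\alpha(r,k):=\sum_{S}\prod_{i\in S}y_i\prod_{j\in[r]\setminus(S\cup(S+1))}x_j$ over subsets $S\subseteq\{1,\dots,r-1\}$ with no two consecutive integers; $\alpha(-1,k):=0$; for $r>k$, $\alpha(r,k):=x_r\alpha(r-1,k)+y_{r-1}\alpha(r-2,k)$; $\alpha_s(r,k):=(\alpha(r,k))_s$. *)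

From HB Require Import structures.
From mathcomp Require Import all_boot all_order all_algebra.
Set Implicit Arguments. Unset Strict Implicit. Unset Printing Implicit Defensive.
Import Order.TTheory GRing.Theory.
Local Open Scope ring_scope.

Section Defs.
Variable K : comPzRingType.

(* Periodic, 1-based extension of a vector v = (v_1,...,v_k) in K^k:
   per v i = v_{((i-1) mod k)+1}  (and per v 0 = v_k). *)
Definition per (k : nat) (v : 'I_k -> K) (i : nat) : K :=
  nth 0 [seq v j | j <- enum 'I_k] ((i + k).-1 %% k).

(* T^k_n(a,b,c) with already-periodised sequences a b c : nat -> K (1-based):
   (0-based) entry (i,i) = a_{i+1}, (i,i+1) = b_{i+1}, (i+1,i) = c_{i+1}. *)
Definition tridiag (n : nat) (a b c : nat -> K) : 'M[K]_n :=
  \matrix_(i < n, j < n)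
    if i == j :> nat then a i.+1
    else if j == i.+1 :> nat then b i.+1
    else if i == j.+1 :> nat then c j.+1
    else 0.

(* alpha(r,k) for 0 <= r <= k, evaluated at x_j := x j, y_j := y j (1-based).
   A subset S of {1..r} is encoded as S : {set 'I_r}, the ordinal u standing
   for u+1.  S must avoid r (S subset of {1..r-1}) and contain no two
   consecutive integers; the x-product is over j in [r] \ (S u (S+1)). *)
Definition alpha_le (x y : nat -> K) (r : nat) : K :=
  \sum_(S : {set 'I_r} | [forall u in S, ((val u).+1 < r)%N] &&
                        [forall u in S, forall v in S, val v != (val u).+1])
    ((\prod_(u in S) y (val u).+1) *
     \prod_(j : 'I_r | (j \notin S) && [forall u in S, val j != (val u).+1])
        x (val j).+1).

Fixpoint alpha (k : nat) (x y : nat -> K) (r : nat) {struct r} : K :=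
  match r with
  | 0 => alpha_le x y 0%N
  | r1.+1 =>
      if (r1.+1 <= k)%N then alpha_le x y r1.+1
      else x r1.+1 * alpha k x y r1 +
           y r1 * (match r1 with 0%N => 0 | r2.+1 => alpha k x y r2 end)
  end.

(* alpha^{a,e}_s(r,k): the shift x_i -> x_{s+i}, y_i -> y_{s+i}, followed by
   the evaluation x_i -> a_i, y_i -> e_i (a, e periodic, 1-based). *)
Definition alphaE (k : nat) (a e : nat -> K) (s r : nat) : K :=
  alpha k (fun t => a (s + t)) (fun t => e (s + t)) r.

End Defs.

Definition iext (k q : nat) (i : nat -> nat) (j : nat) : nat :=
  if (j == 0)%N then i q else if j == q.+1 then (i 1%N + k)%N else i j.

(* exponent m + m_j (m_j as in the paper; m_q = -1 only when p = 0 and m > 0) *)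
Definition expo (m p q j : nat) : nat :=
  if (j < q)%N then (m + (j < p))%N
  else if (0 < p)%N || (m == 0)%N then m else m.-1.

From HB Require Import structures.
From mathcomp Require Import all_boot all_order all_algebra.
From mathcomp Require Import zify ring.
Import Order.TTheory GRing.Theory.
Set Implicit Arguments. Unset Strict Implicit. Unset Printing Implicit Defensive.
Local Open Scope ring_scope.

(* Write K_n(x; y) for the continuant: K_0 = 1, K_1 = x_1 and
   K_{n+2} = x_{n+2} K_{n+1} + y_{n+1} K_n.  The proof has four steps.
   1. Laplace expansion along the last row: det T_n(a,b,c) = K_n(a; -bc).
   2. The subset sum alpha(r,k) of the paper obeys the same recurrence
      (split the admissible subsets of {1..r} by whether r-1 is chosen),
      so alpha(r,k) = K_r for every k, and the shifted evaluated alpha_s is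
      the continuant of the sequences started after position s.
   3. A vanishing link y_s = 0 splits a continuant at s.  Cutting at
      i_1 < ... < i_q and using k-periodicity, the continuant of length
      i_1 + t k + (i_J - i_1) + L equals
      K_{i_1} * prod_j B_j^(t + [j < J]) * (continuant of length L after i_J),
      B_j being the block from i_j to i_{j+1}.
   4. The theorem is the instance t = m - 1, J = q when r <= i_1, and
      t = m, J = p otherwise, once the exponents m + m_j are identified. *)

Lemma nat_ind2 (P : nat -> Prop) :
  P 0%N -> P 1%N -> (forall n, P n -> P n.+1 -> P n.+2) -> forall n, P n.
Proof.
move=> P0 P1 IH n; suff [] : P n /\ P n.+1 by [].
by elim: n => [|n [Pn Pn1]]; split; auto.
Qed.

Section Continuant.
Variable K : comPzRingType.

Fixpoint cont (x y : nat -> K) (n : nat) : K :=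
  match n with
  | 0 => 1
  | 1 => x 1%N
  | (m.+1 as n1).+1 => x n1.+1 * cont x y n1 + y n1 * cont x y m
  end.

Lemma cont_SS x y n : cont x y n.+2 = x n.+2 * cont x y n.+1 + y n.+1 * cont x y n.
Proof. by []. Qed.

Lemma cont_ext x x' y y' n : x =1 x' -> y =1 y' -> cont x y n = cont x' y' n.
Proof.
move=> ex ey; elim/nat_ind2: n => [| |n IH1 IH2]; [by [] | exact: ex |].
by rewrite !cont_SS ex ey IH1 IH2.
Qed.
End Continuant.

Section Determinant.
Variable K : comPzRingType.
Variables a b c : nat -> K.

Lemma det_last_col n (M : 'M[K]_n.+1) :
  (forall i, i != ord_max -> M i ord_max = 0) ->
  \det M = M ord_max ord_max * \det (row' ord_max (col' ord_max M)).
Proof.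
move=> H; rewrite (expand_det_col _ ord_max) (bigD1 ord_max) //= big1 ?addr0.
  by rewrite /cofactor -signr_odd addnn odd_double expr0 mul1r.
by move=> i /H ->; rewrite mul0r.
Qed.

Lemma tridiag_minor_max n :
  row' ord_max (col' ord_max (tridiag n.+1 a b c)) = tridiag n a b c.
Proof. by apply/matrixP => i j; rewrite !mxE !lift_max. Qed.

(* The minor of T_{n+2} at the last row and column n+1 (0-based n) is
   triangular in its last column, with corner entry b_{n+1} over T_n. *)
Lemma tridiag_minor_sub n (j0 : 'I_n.+2) : val j0 = n ->
  \det (row' ord_max (col' j0 (tridiag n.+2 a b c))) = b n.+1 * \det (tridiag n a b c).
Proof.
move=> j0E; have bump_n : bump n n = n.+1 by rewrite /bump leqnn.
rewrite det_last_col => [|i]; rewrite !mxE lift_max /= j0E bump_n.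
  rewrite eqxx (_ : n == n.+1 = false) ?ltn_eqF //; congr (_ * \det _).
  apply/matrixP => i j; rewrite !mxE !lift_max /= j0E.
  by rewrite (_ : bump n j = j) // /bump leqNgt ltn_ord.
move=> ne_in; have lt_in : (i < n)%N by move: ne_in (ltn_ord i); rewrite -val_eqE /=; lia.
by rewrite eqSS (gtn_eqF lt_in) !ltn_eqF //; lia.
Qed.

(* Laplace expansion along the last row gives the three-term recurrence. *)
Lemma det_tridiag_SS n :
  \det (tridiag n.+2 a b c) =
  a n.+2 * \det (tridiag n.+1 a b c) - b n.+1 * c n.+1 * \det (tridiag n a b c).
Proof.
have lt_n : (n < n.+2)%N by [].
pose jn := Ordinal lt_n.
have sign_even : (-1) ^+ (n.+1 + n.+1) = 1 :> K by rewrite -signr_odd addnn odd_double.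
have sign_odd : (-1) ^+ (n.+1 + n) = -1 :> K by rewrite -signr_odd addSn addnn /= odd_double.
rewrite (expand_det_row _ ord_max) (bigD1 ord_max) // (bigD1 jn) /=; last first.
  by rewrite -val_eqE /= ltn_eqF.
rewrite big1 ?addr0 => [|j /andP[]]; last first.
  rewrite -!val_eqE /= !mxE /= => ne_j1 ne_j0.
  by rewrite !ifF ?mul0r //; apply/negbTE/eqP; have := ltn_ord j; lia.
rewrite [tridiag _ _ _ _ _ _]mxE [tridiag _ _ _ _ _ _]mxE /= eqxx gtn_eqF // ltn_eqF //.
rewrite /cofactor (@tridiag_minor_sub n jn) // tridiag_minor_max sign_even sign_odd; ring.
Qed.

Lemma det_tridiag n : \det (tridiag n a b c) = cont a (fun t => - (b t * c t)) n.
Proof.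
elim/nat_ind2: n => [| |n IH1 IH2]; [exact: det_mx00 | by rewrite det_mx11 mxE |].
by rewrite det_tridiag_SS cont_SS IH1 IH2; ring.
Qed.
End Determinant.

Section Subsets.
Variable R : nmodType.

Lemma sum_subsets_recr n (F : {set 'I_n.+1} -> R) :
  \sum_(T : {set 'I_n.+1}) F T =
  \sum_(S : {set 'I_n}) (F (lift ord_max @: S) + F (ord_max |: lift ord_max @: S)).
Proof.
pose restr (T : {set 'I_n.+1}) : {set 'I_n} := [set i | lift ord_max i \in T].
have restrK (S : {set 'I_n}) : restr (lift ord_max @: S) = S.
  by apply/setP => i; rewrite inE mem_imset //; exact: lift_inj.
have max_notin (S : {set 'I_n}) : ord_max \notin lift ord_max @: S.
  by apply/imsetP => -[i _ /eqP]; rewrite (negbTE (neq_lift _ _)).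
have restrE T : lift ord_max @: restr T = T :\ ord_max.
  apply/setP => j; rewrite !inE; case: (unliftP ord_max j) => [i ->|->].
    by rewrite (mem_imset _ _ (@lift_inj _ ord_max)) inE eq_sym (negbTE (neq_lift _ _)).
  by rewrite eqxx; apply/negbTE.
rewrite (bigID [pred T : {set 'I_n.+1} | ord_max \in T]) /= big_split /= addrC.
congr (_ + _).
  rewrite (reindex_onto (fun S : {set 'I_n} => lift ord_max @: S) restr) => [|T T_max].
    by apply: eq_bigl => S; rewrite max_notin restrK eqxx.
  by apply/setP => j; rewrite restrE !inE andb_idl // => jT; apply: contraNneq T_max => <-.
rewrite (reindex_onto (fun S : {set 'I_n} => ord_max |: lift ord_max @: S) restr) => [|T T_max].
  apply: eq_bigl => S; rewrite setU11 /=; apply/eqP/setP => i.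
  by rewrite !inE eq_sym (negbTE (neq_lift _ _)) (mem_imset _ _ (@lift_inj _ ord_max)).
by rewrite restrE setD1K.
Qed.

Definition memS r (S : {set 'I_r}) (t : nat) : bool := [exists u in S, val u == t].

Lemma memS0 r : memS (set0 : {set 'I_r}) =1 (fun _ => false).
Proof. by move=> t; apply/existsP => -[u]; rewrite inE. Qed.

Lemma memS_ord r (S : {set 'I_r}) (u : 'I_r) : memS S u = (u \in S).
Proof.
apply/existsP/idP => [[v /andP[vS /eqP /val_inj <-]] // | uS].
by exists u; rewrite uS eqxx.
Qed.

Lemma memS_lt r (S : {set 'I_r}) t : memS S t -> (t < r)%N.
Proof. by case/existsP => u /andP[_ /eqP <-]; apply: ltn_ord. Qed.

Lemma memS_lift n (S : {set 'I_n}) : memS (lift ord_max @: S) =1 memS S.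
Proof.
move=> t; apply/existsP/existsP => [[_ /andP[/imsetP[u uS ->] /eqP <-]] | [u /andP[uS /eqP <-]]].
  by exists u; rewrite uS eq_sym; apply/eqP; exact: lift_max.
by exists (lift ord_max u); rewrite (mem_imset _ _ (@lift_inj _ ord_max)) uS; apply/eqP; exact: lift_max.
Qed.

Lemma memS_lift_max n (S : {set 'I_n}) :
  memS (ord_max |: lift ord_max @: S) =1 (fun t => (t == n) || memS S t).
Proof.
move=> t /=; rewrite -(memS_lift S t); apply/existsP/idP => [[u]|].
  rewrite in_setU1 => /andP[/orP[/eqP -> | uS] /eqP <-]; first by rewrite eqxx.
  by rewrite memS_ord uS orbT.
case/orP => [/eqP -> | /existsP[u /andP[uS ut]]]; first by exists ord_max; rewrite setU11 /=.
by exists u; rewrite in_setU1 uS orbT.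
Qed.

Lemma sum_memS_recr n (F : (nat -> bool) -> R) :
  (forall P Q, P =1 Q -> F P = F Q) ->
  \sum_(S : {set 'I_n.+1}) F (memS S) =
  \sum_(S : {set 'I_n}) (F (memS S) + F (fun t => (t == n) || memS S t)).
Proof.
move=> F_ext; rewrite sum_subsets_recr; apply: eq_bigr => S _.
by rewrite (F_ext _ _ (memS_lift S)) (F_ext _ _ (memS_lift_max S)).
Qed.

Lemma sum_subsets0 (F : {set 'I_0} -> R) : \sum_(S : {set 'I_0}) F S = F set0.
Proof.
by rewrite (big_pred1 set0) // => S; rewrite /= (_ : S = set0) ?eqxx //; apply/setP => -[].
Qed.
End Subsets.

Section AlphaContinuant.
Variable K : comPzRingType.
Variables x y : nat -> K.

(* A predicate P on nat, read as a subset S of {0,..,r-1} (u standing for u+1),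
   is admissible when r-1 is not in it and it has no two consecutive elements. *)
Definition sparse r (P : nat -> bool) : bool :=
  all (fun u => P u ==> (u.+1 < r)%N && ~~ P u.+1) (iota 0 r).

Definition factor (P : nat -> bool) (j : nat) : K :=
  if P j then y j.+1 else if (0 < j)%N && P j.-1 then 1 else x j.+1.

Definition term r (P : nat -> bool) : K :=
  if sparse r P then \prod_(0 <= j < r) factor P j else 0.

Lemma term_ext r P Q : P =1 Q -> term r P = term r Q.
Proof.
move=> ePQ; rewrite /term /sparse /factor.
under eq_all do rewrite !ePQ.
by under eq_bigr do rewrite !ePQ.
Qed.

Lemma sparse_memS r (S : {set 'I_r}) :
  [forall u in S, ((val u).+1 < r)%N] &&
  [forall u in S, forall v in S, val v != (val u).+1] = sparse r (memS S).
Proof.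
apply/idP/idP => [/andP[/forall_inP top /forall_inP gap] | /allP sp].
  apply/allP => t _.
  apply/implyP => /existsP[u /andP[uS /eqP <-]]; rewrite top //=.
  by apply/existsP => -[v /andP[vS /eqP vu]]; move/forall_inP: (gap u uS) => /(_ v vS); rewrite vu eqxx.
have sp_u u : u \in S -> ((val u).+1 < r)%N && ~~ memS S (val u).+1.
  by move=> uS; have /implyP := sp u; rewrite mem_iota /= ltn_ord memS_ord uS; apply.
apply/andP; split; apply/forall_inP => u /sp_u /andP[top not_next] //.
apply/forall_inP => v vS.
by apply: contraNneq not_next => <-; rewrite memS_ord.
Qed.

Lemma notin_succ_memS r (S : {set 'I_r}) (j : nat) :
  [forall u in S, j != (val u).+1] = ~~ ((0 < j)%N && memS S j.-1).
Proof.
apply/forall_inP/idP => [no_succ | /negP not_prev u uS].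
  by apply/negP => /andP[j_gt0 /existsP[u /andP[uS /eqP uj]]]; move: (no_succ u uS); rewrite uj prednK ?eqxx.
by apply/eqP => ju; apply: not_prev; rewrite ju /= memS_ord.
Qed.

Lemma monomial_memS r (S : {set 'I_r}) :
  (\prod_(u in S) y (val u).+1) *
  \prod_(j : 'I_r | (j \notin S) && [forall u in S, val j != (val u).+1]) x (val j).+1 =
  \prod_(0 <= j < r) factor (memS S) j.
Proof.
rewrite [RHS]big_mkord [RHS](bigID (mem S)) /=; congr (_ * _).
  by apply: eq_bigr => j jS; rewrite /factor memS_ord jS.
rewrite [RHS](bigID [pred j : 'I_r | [forall u in S, val j != (val u).+1]]) /=.
rewrite [X in _ * X]big1 ?mulr1 => [|j /andP[jS]]; last first.
  by rewrite notin_succ_memS negbK /factor memS_ord (negbTE jS) => ->.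
by apply: eq_bigr => j /andP[jS]; rewrite notin_succ_memS /factor memS_ord (negbTE jS) => /negbTE ->.
Qed.

Lemma alpha_le_term r : alpha_le x y r = \sum_(S : {set 'I_r}) term r (memS S).
Proof.
rewrite /alpha_le big_mkcond; apply: eq_bigr => S _.
by rewrite sparse_memS /term monomial_memS.
Qed.

Lemma sparse_bounded r s (P : nat -> bool) : (forall t, P t -> (t < s)%N) -> (s <= r)%N ->
  sparse r P = all (fun u => P u ==> (u.+1 < r)%N && ~~ P u.+1) (iota 0 s).
Proof.
move=> P_lt s_le_r; rewrite /sparse -(subnKC s_le_r) iotaD all_cat add0n.
rewrite [X in _ && X](_ : _ = true) ?andbT //.
by apply/allP => u; rewrite mem_iota => /andP[s_le_u _]; apply/implyP => /P_lt; lia.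
Qed.

Lemma sparse_below r s (P : nat -> bool) : (forall t, P t -> (t < s)%N) -> (s < r)%N ->
  sparse r P = all (fun u => P u ==> ~~ P u.+1) (iota 0 s).
Proof.
move=> P_lt s_lt_r; rewrite (sparse_bounded P_lt (ltnW s_lt_r)).
by apply: eq_in_all => u; rewrite mem_iota add0n => /andP[_ u_lt]; rewrite (leq_ltn_trans u_lt s_lt_r).
Qed.

Lemma term_top_free r (Q : nat -> bool) : (forall t, Q t -> (t < r)%N) ->
  term r.+2 Q = x r.+2 * term r.+1 Q.
Proof.
move=> Q_lt; have [Qr Qr1] : Q r = false /\ Q r.+1 = false.
  by split; apply/negbTE/negP => /Q_lt; lia.
rewrite /term !(sparse_below Q_lt) //.
case: ifP => _; last by rewrite mulr0.
by rewrite big_nat_recr //= mulrC /factor Qr1 /= Qr.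
Qed.

(* The last index r cannot be chosen. *)
Lemma term_top_chosen r (Q : nat -> bool) : term r.+1 (fun t => (t == r) || Q t) = 0.
Proof.
rewrite /term; case: ifP => // /allP /(_ r); rewrite mem_iota add0n ltnSn eqxx ltnn.
by move/(_ isT).
Qed.

(* Choosing r (hence covering r+1) contributes y_{r+1}. *)
Lemma term_top_pair r (Q : nat -> bool) : (forall t, Q t -> (t < r)%N) ->
  term r.+2 (fun t => (t == r) || Q t) = y r.+1 * term r Q.
Proof.
move=> Q_lt; have [Qr Qr1] : Q r = false /\ Q r.+1 = false.
  by split; apply/negbTE/negP => /Q_lt; lia.
have P_lt t : (t == r) || Q t -> (t < r.+1)%N by case/orP => [/eqP -> // | /Q_lt]; lia.
have iota_rcons : iota 0 r.+1 = rcons (iota 0 r) r by rewrite -cats1 -addn1 iotaD.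
rewrite /term (sparse_below P_lt) // (sparse_bounded Q_lt) // iota_rcons all_rcons.
rewrite eqxx (gtn_eqF (ltnSn r)) Qr1 /=.
rewrite (eq_in_all (a2 := fun u => Q u ==> (u.+1 < r)%N && ~~ Q u.+1)) => [|u]; last first.
  rewrite mem_iota add0n => /andP[_ u_lt]; rewrite (ltn_eqF u_lt) /=.
  by case: (Q u) => //=; rewrite negb_or ltn_neqAle u_lt andbT.
case: ifP => _; last by rewrite mulr0.
rewrite !big_nat_recr //= /factor /= eqxx (gtn_eqF (ltnSn r)) Qr1 mulr1 mulrC.
congr (_ * _); apply: eq_big_nat => j /andP[_ j_lt].
by rewrite (ltn_eqF j_lt) (ltn_eqF (leq_ltn_trans (leq_pred j) j_lt)).
Qed.

Lemma term_empty r : term r (fun _ => false) = \prod_(0 <= j < r) x j.+1.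
Proof.
rewrite /term /sparse (_ : all _ _ = true); last exact/allP.
by apply: eq_bigr => j _; rewrite /factor /= andbF.
Qed.

Lemma alpha_le0 : alpha_le x y 0 = 1.
Proof. by rewrite alpha_le_term sum_subsets0 (term_ext 0 (memS0 0)) term_empty big_geq. Qed.

Lemma alpha_le1 : alpha_le x y 1 = x 1%N.
Proof.
rewrite alpha_le_term sum_memS_recr; last exact: term_ext.
by rewrite sum_subsets0 term_top_chosen addr0 (term_ext 1 (memS0 0)) term_empty big_nat1.
Qed.

Lemma alpha_le_SS r :
  alpha_le x y r.+2 = x r.+2 * alpha_le x y r.+1 + y r.+1 * alpha_le x y r.
Proof.
rewrite !alpha_le_term (sum_memS_recr _ (term_ext r.+2)).
under eq_bigr do rewrite term_top_chosen addr0.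
rewrite (sum_memS_recr _ (term_ext r.+2)) (sum_memS_recr _ (term_ext r.+1)).
under [X in _ = _ * X + _]eq_bigr do rewrite term_top_chosen addr0.
rewrite big_split /= !mulr_sumr; congr (_ + _); apply: eq_bigr => S _.
  exact/term_top_free/memS_lt.
exact/term_top_pair/memS_lt.
Qed.

Lemma alpha_le_cont r : alpha_le x y r = cont x y r.
Proof.
elim/nat_ind2: r => [| |r IH1 IH2]; [exact: alpha_le0 | exact: alpha_le1 |].
by rewrite alpha_le_SS cont_SS IH1 IH2.
Qed.

(* Hence alpha(r,k) is the continuant for every k: beyond k both satisfy
   the same recurrence. *)
Lemma alpha_cont k r : alpha k x y r = cont x y r.
Proof.
elim/nat_ind2: r => [| |r IH1 IH2]; first exact: alpha_le0.
  by rewrite /=; case: ifP => _; rewrite ?alpha_le1 // alpha_le0 mulr0 addr0 mulr1.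
have alpha_SS : alpha k x y r.+2 = if (r.+2 <= k)%N then alpha_le x y r.+2
    else x r.+2 * alpha k x y r.+1 + y r.+1 * alpha k x y r by [].
by rewrite alpha_SS; case: ifP => _; rewrite ?alpha_le_cont cont_SS ?IH1 ?IH2.
Qed.
End AlphaContinuant.

Section Split.
Variable K : comPzRingType.
Variables x y : nat -> K.

Definition cont_from (s L : nat) : K :=
  cont (fun t => x (s + t)%N) (fun t => y (s + t)%N) L.

Lemma cont_from0 L : cont_from 0 L = cont x y L.
Proof. exact: cont_ext. Qed.

Lemma cont_split s L : y s = 0 -> cont x y (s + L) = cont x y s * cont_from s L.
Proof.
move=> ys0; elim/nat_ind2: L => [| |L IH1 IH2].
- by rewrite addn0 mulr1.
- case: s ys0 => [|s] ys0; first by rewrite /= mul1r.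
  by rewrite addn1 cont_SS ys0 mul0r addr0 [LHS]mulrC /cont_from /= addn1.
- rewrite addnS addnS cont_SS -!addnS IH1 IH2 [cont_from s L.+2]/cont_from cont_SS.
  rewrite -/(cont_from s L.+1) -/(cont_from s L); ring.
Qed.

Lemma cont_from_periodic k s L :
  (forall t, x (t + k)%N = x t) -> (forall t, y (t + k)%N = y t) ->
  cont_from (s + k) L = cont_from s L.
Proof. by move=> x_per y_per; apply: cont_ext => t; rewrite addnAC ?x_per ?y_per. Qed.

Lemma alphaE_cont_from k s L : alphaE k x y s L = cont_from s L.
Proof. exact: alpha_cont. Qed.
End Split.

Lemma cont_from_split (K : comPzRingType) (x y : nat -> K) s L1 L2 : y (s + L1)%N = 0 ->
  cont_from x y s (L1 + L2) = cont_from x y s L1 * cont_from x y (s + L1) L2.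
Proof.
move=> y0; rewrite /cont_from cont_split //; congr (_ * _).
by apply: cont_ext => t; rewrite addnA.
Qed.

Lemma prod_exp_partial (K : comPzRingType) (F : nat -> K) m n J t : (m <= J <= n)%N ->
  \prod_(m <= j < n) F j ^+ (t + (j < J)) =
  (\prod_(m <= j < n) F j) ^+ t * \prod_(m <= j < J) F j.
Proof.
move=> /andP[m_le_J J_le_n].
under eq_bigr do rewrite exprD.
rewrite big_split /= prodrXl; congr (_ * _).
rewrite (big_cat_nat m_le_J J_le_n) /=.
rewrite [X in _ * X](@eq_big_nat _ _ _ J n _ (fun=> 1)) => [|j /andP[J_le_j _]]; last first.
  by rewrite leq_gtF.
by rewrite big1_eq mulr1; apply: eq_big_nat => j /andP[_ ->]; exact: expr1.
Qed.

Section PeriodicBlocks.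
Variable K : comPzRingType.
Variables (X Y : nat -> K) (k q : nat) (ii : nat -> nat).
Hypotheses (X_per : forall t, X (t + k)%N = X t) (Y_per : forall t, Y (t + k)%N = Y t).
Hypotheses (q_gt0 : (0 < q)%N) (ii_incr : forall j, (1 <= j <= q)%N -> (ii j < ii j.+1)%N).
Hypotheses (ii_last : ii q.+1 = (ii 1%N + k)%N) (Y_ii : forall j, (1 <= j <= q)%N -> Y (ii j) = 0).

Definition block j := cont_from X Y (ii j) (ii j.+1 - ii j).

(* By periodicity the link at i_{q+1} = i_1 + k vanishes too. *)
Lemma Y_ii_ext j : (1 <= j <= q.+1)%N -> Y (ii j) = 0.
Proof.
case/andP=> j_gt0; rewrite leq_eqVlt ltnS => /orP[/eqP -> | j_le_q]; last by rewrite Y_ii // j_gt0.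
by rewrite ii_last Y_per Y_ii // q_gt0.
Qed.

Lemma ii_ge_first J : (1 <= J <= q.+1)%N -> (ii 1%N <= ii J)%N.
Proof.
case/andP; elim: J => [//|[|J] IH _ J_le] //.
by apply: leq_trans (IH isT (ltnW J_le)) (ltnW (ii_incr _)).
Qed.

Lemma cont_from_blocks J L : (1 <= J <= q.+1)%N ->
  cont_from X Y (ii 1%N) (ii J - ii 1%N + L) = (\prod_(1 <= j < J) block j) * cont_from X Y (ii J) L.
Proof.
case/andP; elim: J L => [//|[|J] IH L _ J_le].
  by rewrite subnn big_geq ?mul1r.
have J_ge : (ii 1%N <= ii J.+1)%N by apply: ii_ge_first; lia.
have J_incr : (ii J.+1 < ii J.+2)%N by apply: ii_incr; lia.
rewrite (_ : ii J.+2 - ii 1%N + L = ii J.+1 - ii 1%N + (ii J.+2 - ii J.+1 + L))%N; last by lia.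
rewrite IH // ?(ltnW J_le) // cont_from_split subnKC ?(ltnW J_incr) ?Y_ii_ext //.
by rewrite [in RHS]big_nat_recr //= mulrA.
Qed.

(* One full period, from i_1 to i_1 + k, is the product of the q blocks. *)
Lemma cont_from_periods t L :
  cont_from X Y (ii 1%N) (t * k + L) = (\prod_(1 <= j < q.+1) block j) ^+ t * cont_from X Y (ii 1%N) L.
Proof.
elim: t L => [|t IH] L; first by rewrite mul0n add0n mul1r.
have := @cont_from_blocks q.+1 (t * k + L) (leqnn _); rewrite ii_last addKn mulSn addnA => ->.
by rewrite cont_from_periodic // IH exprS mulrA.
Qed.

Lemma cont_periodic t J L : (1 <= J <= q)%N ->
  cont X Y (ii 1%N + (t * k + (ii J - ii 1%N + L))) =
  cont X Y (ii 1%N) * \prod_(1 <= j < q.+1) block j ^+ (t + (j < J)) * cont_from X Y (ii J) L.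
Proof.
case/andP=> J_gt0 J_le_q.
rewrite cont_split; last by rewrite Y_ii // q_gt0.
rewrite cont_from_periods cont_from_blocks ?J_gt0 ?leqW // prod_exp_partial ?J_gt0 ?leqW //.
by rewrite !mulrA.
Qed.
End PeriodicBlocks.

Section Periodisation.
Variables (K : comPzRingType) (k : nat).

Lemma per_periodic (v : 'I_k -> K) t : per v (t + k) = per v t.
Proof.
rewrite /per; case: k v => [|k'] v; first by rewrite !addn0.
by rewrite (_ : (t + k'.+1 + k'.+1).-1 = (t + k'.+1).-1 + k'.+1)%N ?modnDr //; lia.
Qed.

Lemma per_link (b c : 'I_k -> K) t :
  per (fun j => - (b j * c j)) t = - (per b t * per c t).
Proof.
rewrite /per; case: k b c => [|k'] b c.
  by rewrite (size0nil (size_enum_ord 0)) !nth_nil mul0r oppr0.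
by rewrite !(nth_map ord0) // -?enumT size_enum_ord ltn_pmod.
Qed.

Lemma det_tridiag_per n (a b c : 'I_k -> K) :
  \det (tridiag n (per a) (per b) (per c)) = cont (per a) (per (fun j => - (b j * c j))) n.
Proof. by rewrite det_tridiag; apply: cont_ext => // t; rewrite per_link. Qed.
End Periodisation.

Section Indices.
Variables (k q : nat) (i : nat -> nat).

Lemma iext_mid j : (1 <= j <= q)%N -> iext k q i j = i j.
Proof. by rewrite /iext; case: j => [|j] //= /ltn_eqF; rewrite eqSS => ->. Qed.

Lemma iext_first : iext k q i 0 = i q.
Proof. by []. Qed.

Lemma iext_last : (0 < q)%N -> iext k q i q.+1 = (iext k q i 1%N + k)%N.
Proof. by move=> q_gt0; rewrite (@iext_mid 1%N) ?q_gt0 // /iext eqxx. Qed.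

Lemma iext_incr : (0 < q)%N -> (1 <= i 1%N)%N ->
  (forall j, (1 <= j < q)%N -> (i j < i j.+1)%N) -> (i q <= k)%N ->
  forall j, (1 <= j <= q)%N -> (iext k q i j < iext k q i j.+1)%N.
Proof.
move=> q_gt0 i1_gt0 i_incr iq_le_k j /andP[j_gt0 j_le_q].
rewrite (@iext_mid j) ?j_gt0 //; case: (ltngtP j q) j_le_q => // [j_lt_q | j_q] _.
  by rewrite (@iext_mid j.+1) // i_incr // j_gt0.
by rewrite j_q iext_last // (@iext_mid 1%N) ?q_gt0 //; lia.
Qed.
End Indices.

Lemma expo_pos m p q j : (0 < p <= q)%N -> (j <= q)%N -> expo m p q j = (m + (j < p))%N.
Proof.
rewrite /expo => /andP[-> p_le_q] j_le_q; case: ltnP => // q_le_j.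
by rewrite ltnNge (leq_trans p_le_q q_le_j) addn0.
Qed.

Lemma expo_zero m q j : (j <= q)%N -> expo m.+1 0 q j = (m + (j < q))%N.
Proof. by rewrite /expo addn0; case: ltnP => [_ _|q_le_j j_le_q]; rewrite ?addn1 ?addn0. Qed.

Section CorollarySetting.
Variables (K : comPzRingType) (k q : nat) (a b c : 'I_k -> K) (i : nat -> nat).
Hypotheses (q_gt0 : (0 < q)%N) (i1_gt0 : (1 <= i 1%N)%N).
Hypotheses (i_incr : forall j, (1 <= j < q)%N -> (i j < i j.+1)%N) (iq_le_k : (i q <= k)%N).
Hypothesis zero_link : (forall j, (1 <= j <= q)%N -> per b (i j) = 0) \/
                       (forall j, (1 <= j <= q)%N -> per c (i j) = 0).

Let X := per a.
Let Y := per (fun j => - (b j * c j)).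

Lemma Y_iext j : (1 <= j <= q)%N -> Y (iext k q i j) = 0.
Proof.
move=> j_range; rewrite /Y per_link iext_mid //.
by case: zero_link => ->; rewrite ?mul0r ?mulr0 ?oppr0.
Qed.

Lemma i1_le_iext J : (1 <= J <= q)%N -> (i 1%N <= iext k q i J)%N.
Proof.
move=> /andP[J_gt0 J_le_q]; rewrite -(@iext_mid k q i 1%N) ?q_gt0 //.
by apply: (ii_ge_first (iext_incr q_gt0 i1_gt0 i_incr iq_le_k)); rewrite J_gt0 leqW.
Qed.

Lemma cont_iext t J L : (1 <= J <= q)%N ->
  cont X Y (i 1%N + (t * k + (iext k q i J - i 1%N + L))) =
  cont X Y (i 1%N)
  * \prod_(1 <= j < q.+1) cont_from X Y (iext k q i j) (iext k q i j.+1 - iext k q i j) ^+ (t + (j < J))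
  * cont_from X Y (iext k q i J) L.
Proof.
rewrite -(@iext_mid k q i 1%N) ?q_gt0 //.
exact: (cont_periodic (per_periodic a) (per_periodic _) q_gt0
          (iext_incr q_gt0 i1_gt0 i_incr iq_le_k) (iext_last k i q_gt0) Y_iext).
Qed.
End CorollarySetting.

Unset Implicit Arguments.
Set Strict Implicit.

Theorem corollary5p6 (K : comPzRingType) (k n : nat) (a b c : 'I_k -> K)
    (m r q : nat) (i : nat -> nat) (p : nat) :
  (0 < k)%N -> (0 < n)%N ->
  n = (m * k + r)%N -> (r < k)%N ->
  (1 <= q)%N ->
  (1 <= i 1)%N -> (forall j, (1 <= j < q)%N -> (i j < i j.+1)%N) -> (i q <= k)%N ->
  (i 1%N < n)%N ->
  ((forall j, (1 <= j <= q)%N -> per b (i j) = 0) \/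
   (forall j, (1 <= j <= q)%N -> per c (i j) = 0)) ->
  (if (r <= i 1)%N then p = 0%N
   else (0 < p <= q)%N /\ (iext k q i p < r <= iext k q i p.+1)%N) ->
  let e : 'I_k -> K := fun j => - (b j * c j) in
  let r' := if (r <= i 1)%N then (r + k)%N else r in
  \det (tridiag n (per a) (per b) (per c)) =
    alphaE k (per a) (per e) 0%N (i 1%N)
    * (\prod_(1 <= j < q.+1)
         (alphaE k (per a) (per e) (iext k q i j)
                 (iext k q i j.+1 - iext k q i j)) ^+ (expo m p q j))
    * alphaE k (per a) (per e) (iext k q i p) (r' - iext k q i p).
Proof.
move=> _ _ n_eq r_lt_k q_gt0 i1_gt0 i_incr iq_le_k i1_lt_n zero_link p_spec e r'.
have cont_n := cont_iext a q_gt0 i1_gt0 i_incr iq_le_k zero_link.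
have i1_le := i1_le_iext q_gt0 i1_gt0 i_incr iq_le_k.
rewrite det_tridiag_per !alphaE_cont_from cont_from0.
under eq_bigr do rewrite alphaE_cont_from.
move: p_spec; rewrite /r'; case: (leqP r (i 1%N)) => [r_le_i1 -> | _ [p_range /andP[ip_lt_r _]]].
- case: m n_eq => [|m] n_eq; first lia.
  have iq_eq : iext k q i q = i q by apply: iext_mid; rewrite q_gt0 leqnn.
  have i1_le_iq : (i 1%N <= iext k q i q)%N by apply: i1_le; rewrite q_gt0 leqnn.
  have -> : n = (i 1%N + (m * k + (iext k q i q - i 1%N + (r + k - iext k q i q))))%N.
    by rewrite iq_eq in i1_le_iq *; lia.
  rewrite iext_first -iq_eq cont_n ?q_gt0 ?leqnn //.
  by congr (_ * _ * _); apply: eq_big_nat => j /andP[_ j_le_q]; rewrite expo_zero.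
- have i1_le_ip := i1_le p p_range.
  have -> : n = (i 1%N + (m * k + (iext k q i p - i 1%N + (r - iext k q i p))))%N by lia.
  rewrite cont_n //.
  by congr (_ * _ * _); apply: eq_big_nat => j /andP[_ j_le_q]; rewrite expo_pos.
Qed.
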